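(* Let $g=(g_1,\dots,g_m)$ be real polynomials in $x\in\mathbb R^n$ with $V_{\mathbb R}(g)\neq\emptyset$, and let $d\ge1$. (i) If $V_{\mathbb R}(g)$ is compact, then for $f\in\mathbb R[x]_{\le d}$: $\delta_g(f)>0\iff f\in\operatorname{int}P_d(g)$, and $\delta_g(f)=0\iff f\in\partial P_d(g)$. (ii) If $V^h_{\mathbb R}(g)$ is closed at $\infty$, then for $f\in\mathbb R[x]_{\le d}$: $\delta^h_g(f)>0\iff f\in\operatorname{int}P_d(g)$, and $\delta^h_g(f)=0\iff f\in\partial P_d(g)$.
   Context: $\mathbb R[x]_{\le d}$ is the finite-dimensional space of real polynomials in $x=(x_1,\dots,x_n)$ of degree at most $d$; interior and boundary are taken there in the Euclidean topology. $V_{\mathbb R}(g)=\{x\in\mathbb R^n:g_1(x)=\dots=g_m(x)=0\}$ and $P_d(g)=\{f\in\mathbb R[x]_{\le d}: f(x)\ge0\ \forall x\in V_{\mathbb R}(g)\}$. With $\tilde x=(x_0,x_1,\dots,x_n)$: for $f\in\mathbb R[x]_{\le d}$, $f^h(\tilde x)=x_0^df(x/x_0)$; for each $g_i$ of degree $d_i$, $g_i^h(\tilde x)=x_0^{d_i}g_i(x/x_0)$. $V^h_{\mathbb R}(g)=\{\tilde x\in\mathbb R^{n+1}:g_1^h(\tilde x)=\dots=g_m^h(\tilde x)=0\}$; it is closed at $\infty$ if $V^h_{\mathbb R}(g)\cap\{x_0\ge0\}$ equals the Euclidean closure of $V^h_{\mathbb R}(g)\cap\{x_0>0\}$. Define $\delta_g(f)=\min_{x\in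 V_{\mathbb R}(g)}f(x)$ and $\delta^h_g(f)=\min\{f^h(\tilde x):\tilde x\in V^h_{\mathbb R}(g),\ \|\tilde x\|_2=1,\ x_0\ge0\}$. *)

From Stdlib Require Import Reals List Arith.
Import ListNotations.
Open Scope R_scope.

Definition midx := list nat.

Fixpoint midxs (n D : nat) : list midx :=
  match n with
  | O => [ [] ]
  | S n' => flat_map (fun k => map (cons k) (midxs n' (D - k))) (seq 0 (S D))
  end.

Definition mdeg (a : midx) : nat := list_sum a.

(* A point of R^n is a function nat -> R vanishing at all indices >= n. *)
Definition inRn (n : nat) (x : nat -> R) : Prop := forall i, (n <= i)%nat -> x i = 0.

Fixpoint monoval (a : midx) (x : nat -> R) : R :=
  match a with
  | [] => 1
  | k :: a' => x O ^ k * monoval a' (fun i => x (S i))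
  end.

Definition mpoly := midx -> R.

(* p lies in R[x_1..x_n]_{<= D}: its coefficients are supported on the
   multi-indices of length n and total degree <= D. *)
Definition supp (n D : nat) (p : mpoly) : Prop :=
  forall a, p a <> 0 -> In a (midxs n D).

Definition sumR (l : list R) : R := fold_right Rplus 0 l.

Definition peval (n D : nat) (p : mpoly) (x : nat -> R) : R :=
  sumR (map (fun a => p a * monoval a x) (midxs n D)).

(* the (true) degree of p (0 for the zero polynomial) *)
Definition pdeg (n D : nat) (p : mpoly) : nat :=
  fold_right Nat.max O
    (map (fun a => if Req_EM_T (p a) 0 then O else mdeg a) (midxs n D)).

(* homogenization w.r.t. degree e: p^h(x0,x) = x0^e p(x/x0)
   = sum_a p_a x0^(e - |a|) x^a *)
Definition phom (n D e : nat) (p : mpoly) (x0 : R) (x : nat -> R) : R :=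
  sumR (map (fun a => p a * x0 ^ (e - mdeg a) * monoval a x) (midxs n D)).

Definition VR (n Dg : nat) (g : list mpoly) (x : nat -> R) : Prop :=
  inRn n x /\ Forall (fun gi => peval n Dg gi x = 0) g.

(* V^h_R(g) in R^{n+1}; a point is (x0, x); g_i^h uses d_i = deg g_i *)
Definition VRh (n Dg : nat) (g : list mpoly) (p : R * (nat -> R)) : Prop :=
  inRn n (snd p) /\
  Forall (fun gi => phom n Dg (pdeg n Dg gi) gi (fst p) (snd p) = 0) g.

Definition Pd (n d Dg : nat) (g : list mpoly) (f : mpoly) : Prop :=
  supp n d f /\ forall x, VR n Dg g x -> 0 <= peval n d f x.

(* Euclidean topology on R[x]_{<=d}: via the (l1) norm on coefficients *)
Definition cdist (n d : nat) (f h : mpoly) : R :=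
  sumR (map (fun a => Rabs (f a - h a)) (midxs n d)).

Definition interiorP (n d : nat) (S : mpoly -> Prop) (f : mpoly) : Prop :=
  supp n d f /\
  exists eps, 0 < eps /\
    forall h, supp n d h -> cdist n d f h < eps -> S h.

Definition closureP (n d : nat) (S : mpoly -> Prop) (f : mpoly) : Prop :=
  supp n d f /\
  forall eps, 0 < eps -> exists h, supp n d h /\ S h /\ cdist n d f h < eps.

Definition boundaryP (n d : nat) (S : mpoly -> Prop) (f : mpoly) : Prop :=
  closureP n d S f /\ ~ interiorP n d S f.

Definition near_n (n : nat) (eps : R) (x y : nat -> R) : Prop :=
  forall i, (i < n)%nat -> Rabs (x i - y i) < eps.

Definition open_n (n : nat) (U : (nat -> R) -> Prop) : Prop :=
  forall x, inRn n x -> U x ->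
    exists eps, 0 < eps /\ forall y, inRn n y -> near_n n eps x y -> U y.

Definition compact_n (n : nat) (K : (nat -> R) -> Prop) : Prop :=
  (forall x, K x -> inRn n x) /\
  forall (I : Type) (U : I -> (nat -> R) -> Prop),
    (forall i, open_n n (U i)) ->
    (forall x, K x -> exists i, U i x) ->
    exists l : list I, forall x, K x -> exists i, In i l /\ U i x.

Definition closure_h (n : nat) (S : R * (nat -> R) -> Prop) (p : R * (nat -> R)) : Prop :=
  inRn n (snd p) /\
  forall eps, 0 < eps -> exists q, S q /\ Rabs (fst p - fst q) < eps /\
                                  near_n n eps (snd p) (snd q).

Definition closed_at_inf (n Dg : nat) (g : list mpoly) : Prop :=
  forall p, (VRh n Dg g p /\ 0 <= fst p) <->
            closure_h n (fun q => VRh n Dg g q /\ 0 < fst q) p.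

Definition is_min {T : Type} (S : T -> Prop) (phi : T -> R) (v : R) : Prop :=
  (exists x, S x /\ phi x = v) /\ forall x, S x -> v <= phi x.

Definition sqnorm_h (n : nat) (p : R * (nat -> R)) : R :=
  fst p ^ 2 + sumR (map (fun i => snd p i ^ 2) (seq 0 n)).

(* the feasible set of delta^h_g *)
Definition Sh (n Dg : nat) (g : list mpoly) (p : R * (nat -> R)) : Prop :=
  VRh n Dg g p /\ sqnorm_h n p = 1 /\ 0 <= fst p.

From Stdlib Require Import Reals List Arith Lra Lia.
From Stdlib Require Import Classical ClassicalEpsilon FunctionalExtensionality.
Import ListNotations.
Open Scope R_scope.

(* Both minima are attained, on V(g) by compactness and on the unit points of
   V^h(g) with x0 >= 0 because that set is closed in the unit cube (Heine-Borel
   by bisection).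
   If v > 0, every coefficient perturbation small compared with v keeps f
   nonnegative: in (i) since |h(x) - f(x)| <= dist(f, h) * sum_a |x^a| with the
   sum bounded on V(g); in (ii) since monomials are bounded by 1 on the unit
   sphere and f(x) >= 0 iff f^h(t, t x) >= 0 for t > 0. Conversely, if f is
   interior then f - e stays in P_d(g), and so does f - e' x_i^d when the
   minimizer is a point (0, x) at infinity with x_i <> 0; closedness at infinity
   makes nonnegativity on V(g) pass to f^h at such points, forcing v > 0.
   Then v = 0 exactly when f is in the closure but not in the interior. *)

Lemma sumR_map_ext {A} (F G : A -> R) l :
  (forall a, In a l -> F a = G a) -> sumR (map F l) = sumR (map G l).
Proof. induction l; simpl; intros H; [lra|]. rewrite H, IHl; auto. Qed.

Lemma sumR_map_eq0 {A} (F : A -> R) l :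
  (forall a, In a l -> F a = 0) -> sumR (map F l) = 0.
Proof. induction l; simpl; intros H; [lra|]. rewrite H, IHl; auto; lra. Qed.

Lemma sumR_map_scal {A} (c : R) (F : A -> R) l :
  sumR (map (fun a => c * F a) l) = c * sumR (map F l).
Proof. induction l; simpl; [lra|]. rewrite IHl; lra. Qed.

Lemma sumR_map_minus {A} (F G : A -> R) l :
  sumR (map F l) - sumR (map G l) = sumR (map (fun a => F a - G a) l).
Proof. induction l; simpl; [lra|]. rewrite <- IHl; lra. Qed.

Lemma sumR_map_le {A} (F G : A -> R) l :
  (forall a, In a l -> F a <= G a) -> sumR (map F l) <= sumR (map G l).
Proof.
  induction l; simpl; intros H; [lra|].
  assert (F a <= G a) by auto.
  assert (sumR (map F l) <= sumR (map G l)) by auto. lra.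
Qed.

Lemma sumR_map_nonneg {A} (F : A -> R) l :
  (forall a, In a l -> 0 <= F a) -> 0 <= sumR (map F l).
Proof.
  intros H. rewrite <- (sumR_map_eq0 (fun _ => 0) l) by auto.
  apply sumR_map_le; auto.
Qed.

Lemma sumR_map_ge_term {A} (F : A -> R) l a :
  (forall b, In b l -> 0 <= F b) -> In a l -> F a <= sumR (map F l).
Proof.
  induction l; simpl; intros H Hi; [tauto|].
  destruct Hi as [<-|Hi].
  - assert (0 <= sumR (map F l)) by (apply sumR_map_nonneg; auto). lra.
  - assert (0 <= F a0) by auto. assert (F a <= sumR (map F l)) by auto. lra.
Qed.

Lemma Rabs_sumR_map_le {A} (F : A -> R) l :
  Rabs (sumR (map F l)) <= sumR (map (fun a => Rabs (F a)) l).
Proof.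
  induction l; simpl.
  - rewrite Rabs_R0; lra.
  - eapply Rle_trans; [apply Rabs_triang|lra].
Qed.

Definition midx_eq_dec : forall a b : midx, {a = b} + {a <> b} := list_eq_dec Nat.eq_dec.

Lemma sumR_map_update (L : list midx) a (u w : midx -> R) :
  NoDup L -> In a L ->
  sumR (map (fun b => if midx_eq_dec b a then u b else w b) L)
  = sumR (map w L) + (u a - w a).
Proof.
  induction L as [|b L IH]; simpl; intros Hn Hi; [tauto|].
  inversion Hn; subst. destruct (midx_eq_dec b a) as [->|Hne].
  - rewrite (sumR_map_ext _ w); [lra|].
    intros c Hc. destruct (midx_eq_dec c a); subst; tauto.
  - destruct Hi as [->|Hi]; [tauto|]. rewrite IH; auto. lra.
Qed.

Lemma midxs_S n D :
  midxs (S n) D = flat_map (fun k => map (cons k) (midxs n (D - k))) (seq 0 (S D)).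
Proof. reflexivity. Qed.

Lemma in_midxs n D a : In a (midxs n D) <-> length a = n /\ (mdeg a <= D)%nat.
Proof.
  revert D a; induction n; intros D a; split.
  - simpl. intros [<-|[]]. unfold mdeg; simpl. lia.
  - intros [Hl _]. destruct a; [simpl; auto|discriminate].
  - rewrite midxs_S, in_flat_map. intros [k [Hk H]]. apply in_seq in Hk.
    apply in_map_iff in H. destruct H as [b [<- Hb]]. apply IHn in Hb.
    unfold mdeg in *; simpl. lia.
  - intros [Hl Hd]. destruct a as [|k b]; [discriminate|].
    unfold mdeg in Hd; simpl in Hl, Hd.
    rewrite midxs_S, in_flat_map. exists k. split; [apply in_seq; lia|].
    apply in_map, IHn. unfold mdeg. lia.
Qed.

Lemma NoDup_midxs n D : NoDup (midxs n D).
Proof.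
  revert D; induction n; intros D; [repeat constructor; simpl; tauto|].
  rewrite midxs_S. generalize (seq_NoDup (S D) 0). generalize (seq 0 (S D)).
  induction l as [|k l IHl]; simpl; intros Hl; [constructor|].
  inversion Hl; subst. apply NoDup_app; auto.
  - apply NoDup_map_NoDup_ForallPairs; auto. intros x y _ _ E; injection E; auto.
  - intros z Hz Hz'. apply in_map_iff in Hz. destruct Hz as [u [<- _]].
    apply in_flat_map in Hz'. destruct Hz' as [k' [Hk' Hz']].
    apply in_map_iff in Hz'. destruct Hz' as [w [E _]]. injection E; intros; subst. tauto.
Qed.

Lemma supp_mdeg n d f a : supp n d f -> f a <> 0 -> (mdeg a <= d)%nat.
Proof. intros Hs Ha. apply (in_midxs n d a), Hs, Ha. Qed.

Lemma mdeg_cons c a : mdeg (c :: a) = (c + mdeg a)%nat.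
Proof. reflexivity. Qed.

Lemma mdeg_zeros m : mdeg (repeat 0%nat m) = 0%nat.
Proof. induction m; auto. Qed.

Lemma mdeg_single i e r : mdeg (repeat 0%nat i ++ e :: repeat 0%nat r) = e.
Proof.
  induction i; cbn [repeat app]; rewrite mdeg_cons; [rewrite mdeg_zeros|]; lia.
Qed.

Lemma zeros_in_midxs n d : In (repeat 0%nat n) (midxs n d).
Proof. apply in_midxs. rewrite repeat_length, mdeg_zeros. lia. Qed.

Lemma single_in_midxs n d i : (i < n)%nat ->
  In (repeat 0%nat i ++ d :: repeat 0%nat (n - 1 - i)) (midxs n d).
Proof.
  intros Hi. apply in_midxs. rewrite length_app, !repeat_length, mdeg_single.
  simpl. rewrite repeat_length. lia.
Qed.

Lemma pdeg_ge_mdeg n D p a : supp n D p -> p a <> 0 -> (mdeg a <= pdeg n D p)%nat.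
Proof.
  intros Hs Ha. unfold pdeg.
  assert (Hin := in_map (fun b => if Req_EM_T (p b) 0 then O else mdeg b) _ _ (Hs a Ha)).
  cbv beta in Hin. destruct (Req_EM_T (p a) 0); [tauto|].
  induction (map _ (midxs n D)); simpl in *; [tauto|].
  destruct Hin as [<-|Hin]; [lia|]. specialize (IHl Hin). lia.
Qed.

Definition cont_n (k : nat) (F : (nat -> R) -> R) : Prop :=
  forall x eps, 0 < eps -> exists del, 0 < del /\
    forall y, near_n k del x y -> Rabs (F x - F y) < eps.

Lemma near_n_le k d d' x y : near_n k d x y -> d <= d' -> near_n k d' x y.
Proof. intros H Hd i Hi. specialize (H i Hi). lra. Qed.

Lemma near_n_min k d1 d2 x y :
  near_n k (Rmin d1 d2) x y -> near_n k d1 x y /\ near_n k d2 x y.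
Proof. intros H; split; eapply near_n_le; eauto; [apply Rmin_l|apply Rmin_r]. Qed.

Lemma cont_const k c : cont_n k (fun _ => c).
Proof.
  intros x eps He. exists 1. split; [lra|]. intros.
  replace (c - c) with 0 by ring. rewrite Rabs_R0; auto.
Qed.

Lemma cont_coord k i : (i < k)%nat -> cont_n k (fun x => x i).
Proof. intros Hi x eps He. exists eps; split; auto. Qed.

Lemma cont_shift k F : cont_n k F -> cont_n (S k) (fun x => F (fun i => x (S i))).
Proof.
  intros H x eps He. destruct (H (fun i => x (S i)) eps He) as [d [Hd H']].
  exists d; split; auto. intros y Hy. apply H'. intros i Hi. apply (Hy (S i)). lia.
Qed.

Lemma cont_plus k F G : cont_n k F -> cont_n k G -> cont_n k (fun x => F x + G x).
Proof.
  intros HF HG x eps He.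
  destruct (HF x (eps/2)) as [d1 [Hd1 H1]]; [lra|].
  destruct (HG x (eps/2)) as [d2 [Hd2 H2]]; [lra|].
  exists (Rmin d1 d2). split; [apply Rmin_glb_lt; auto|].
  intros y Hy. apply near_n_min in Hy. destruct Hy as [Hy1 Hy2].
  specialize (H1 y Hy1). specialize (H2 y Hy2).
  replace (F x + G x - (F y + G y)) with ((F x - F y) + (G x - G y)) by ring.
  eapply Rle_lt_trans; [apply Rabs_triang|lra].
Qed.

Lemma cont_opp k F : cont_n k F -> cont_n k (fun x => - F x).
Proof.
  intros HF x eps He. destruct (HF x eps He) as [d [Hd H]]. exists d; split; auto.
  intros y Hy. replace (- F x - - F y) with (- (F x - F y)) by ring.
  rewrite Rabs_Ropp; auto.
Qed.

Lemma cont_abs k F : cont_n k F -> cont_n k (fun x => Rabs (F x)).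
Proof.
  intros HF x eps He. destruct (HF x eps He) as [d [Hd H]]. exists d; split; auto.
  intros y Hy. eapply Rle_lt_trans; [apply Rabs_triang_inv2|apply (H y Hy)].
Qed.

Lemma Rdiv_add1_lt_1 a : 0 <= a -> a / (a + 1) < 1.
Proof.
  intros Ha. apply (Rmult_lt_reg_r (a + 1)); [lra|].
  unfold Rdiv. rewrite Rmult_assoc, Rinv_l; lra.
Qed.

Lemma cont_mult k F G : cont_n k F -> cont_n k G -> cont_n k (fun x => F x * G x).
Proof.
  intros HF HG x eps He.
  set (a := Rabs (F x)). set (b := Rabs (G x)).
  assert (Ha : 0 <= a) by apply Rabs_pos. assert (Hb : 0 <= b) by apply Rabs_pos.
  destruct (HF x (eps / 2 / (b + 1))) as [d1 [Hd1 H1]].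
  { apply Rdiv_lt_0_compat; lra. }
  destruct (HG x (Rmin 1 (eps / 2 / (a + 1)))) as [d2 [Hd2 H2]].
  { apply Rmin_glb_lt; [lra|]. apply Rdiv_lt_0_compat; lra. }
  exists (Rmin d1 d2). split; [apply Rmin_glb_lt; auto|].
  intros y Hy. apply near_n_min in Hy. destruct Hy as [Hy1 Hy2].
  specialize (H1 y Hy1). specialize (H2 y Hy2).
  pose proof (Rmin_l 1 (eps / 2 / (a + 1))). pose proof (Rmin_r 1 (eps / 2 / (a + 1))).
  assert (HGy : Rabs (G y) <= b + 1).
  { unfold b. replace (G y) with (G x - (G x - G y)) by ring.
    eapply Rle_trans; [apply Rabs_triang|]. rewrite Rabs_Ropp. lra. }
  replace (F x * G x - F y * G y) with (F x * (G x - G y) + G y * (F x - F y)) by ring.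
  eapply Rle_lt_trans; [apply Rabs_triang|]. rewrite !Rabs_mult. fold a.
  assert (E1 : a * Rabs (G x - G y) <= a * (eps / 2 / (a + 1))).
  { apply Rmult_le_compat_l; lra. }
  assert (E2 : Rabs (G y) * Rabs (F x - F y) <= (b + 1) * (eps / 2 / (b + 1))).
  { apply Rmult_le_compat; try apply Rabs_pos; lra. }
  assert (E3 : a * (eps / 2 / (a + 1)) < eps / 2).
  { replace (a * (eps / 2 / (a + 1))) with (eps / 2 * (a / (a + 1))) by (field; lra).
    pose proof (Rdiv_add1_lt_1 a Ha). nra. }
  assert (E4 : (b + 1) * (eps / 2 / (b + 1)) = eps / 2) by (field; lra).
  lra.
Qed.

Lemma cont_pow k F m : cont_n k F -> cont_n k (fun x => F x ^ m).
Proof. intros HF; induction m; simpl; [apply cont_const|apply cont_mult; auto]. Qed.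

Lemma cont_sumR {A} k (G : A -> (nat -> R) -> R) l :
  (forall a, In a l -> cont_n k (G a)) -> cont_n k (fun x => sumR (map (fun a => G a x) l)).
Proof. induction l; simpl; intros H; [apply cont_const|apply cont_plus; auto]. Qed.

Lemma cont_monoval a k : (length a <= k)%nat -> cont_n k (monoval a).
Proof.
  revert k; induction a as [|c a IH]; intros k Hk; simpl; [apply cont_const|].
  destruct k as [|k]; simpl in Hk; [lia|].
  apply cont_mult; [apply cont_pow, cont_coord; lia|].
  apply (cont_shift k (monoval a)), IH. lia.
Qed.

Lemma cont_peval n D p : cont_n n (peval n D p).
Proof.
  apply (cont_sumR n (fun a x => p a * monoval a x)). intros a Ha.
  apply cont_mult; [apply cont_const|]. apply in_midxs in Ha. apply cont_monoval. lia.
Qed.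

Lemma cont_neq k F y c :
  cont_n k F -> F y <> c -> exists d, 0 < d /\ forall z, near_n k d y z -> F z <> c.
Proof.
  intros HF Hne. destruct (HF y (Rabs (F y - c))) as [d [Hd H]].
  { apply Rabs_pos_lt. lra. }
  exists d; split; auto. intros z Hz Hc. specialize (H z Hz). rewrite Hc in H. lra.
Qed.

(** * Compactness *)

(* A gauge assigns admissible radii [d] to the points [y] of [K]; compactness
   is used only through the existence of finite subcovers of gauge balls. *)
Definition finite_gauge_cover (k : nat) (K : (nat -> R) -> Prop) : Prop :=
  forall G : (nat -> R) -> R -> Prop,
    (forall y, K y -> exists d, 0 < d /\ G y d) ->
    exists l : list ((nat -> R) * R), forall x, K x ->
      exists p, In p l /\ G (fst p) (snd p) /\ near_n k (snd p) (fst p) x.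

Lemma list_lower_bound {A} (l : list A) (h : A -> R) :
  exists B, forall p, In p l -> B <= h p.
Proof.
  induction l as [|a l [B HB]]; simpl; [exists 0; tauto|].
  exists (Rmin (h a) B). intros p [<-|Hp]; [apply Rmin_l|].
  eapply Rle_trans; [apply Rmin_r|auto].
Qed.

Lemma list_pos_lower_bound {A} (l : list A) (h : A -> R) (P : A -> Prop) :
  (forall p, In p l -> P p -> 0 < h p) ->
  exists e, 0 < e /\ forall p, In p l -> P p -> e <= h p.
Proof.
  induction l as [|a l IH]; simpl; intros H; [exists 1; split; [lra|tauto]|].
  destruct IH as [e [He H']]; [intros; auto|].
  destruct (classic (P a)) as [Pa|nPa].
  - exists (Rmin (h a) e). split; [apply Rmin_glb_lt; auto|].
    intros p [<-|Hp] Pp; [apply Rmin_l|]. eapply Rle_trans; [apply Rmin_r|auto].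
  - exists e. split; auto. intros p [<-|Hp] Pp; [tauto|auto].
Qed.

Lemma gauge_cover_bounded_below k K F :
  finite_gauge_cover k K -> cont_n k F -> exists B, forall z, K z -> B < F z.
Proof.
  intros HC HF.
  destruct (HC (fun y d => forall z, near_n k d y z -> F y - 1 < F z)) as [l Hl].
  { intros y Ky. destruct (HF y 1) as [d [Hd H]]; [lra|]. exists d; split; auto.
    intros z Hz. specialize (H z Hz). apply Rabs_def2 in H. lra. }
  destruct (list_lower_bound l (fun p => F (fst p) - 1)) as [B HB].
  exists B. intros z Kz. destruct (Hl z Kz) as [p [Hp [Hg Hn]]].
  specialize (Hg z Hn). specialize (HB p Hp). simpl in HB. lra.
Qed.

(* If the infimum [m] were not attained, [F - m] would be positive on [K], and
   a finite subcover would bound it below by some [e > 0]: [m + e] would be a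
   larger lower bound. *)
Lemma gauge_cover_attains_min k K F :
  finite_gauge_cover k K -> (exists x, K x) -> cont_n k F -> exists v, is_min K F v.
Proof.
  intros HC [x0 Hx0] HF.
  destruct (gauge_cover_bounded_below k K F HC HF) as [B HB].
  destruct (completeness (fun r => exists z, K z /\ r = - F z)) as [M [HM1 HM2]].
  { exists (-B). intros r [z [Kz ->]]. specialize (HB z Kz). lra. }
  { exists (- F x0), x0; auto. }
  assert (Hge : forall z, K z -> - M <= F z).
  { intros z Kz. assert (- F z <= M) by (apply HM1; exists z; auto). lra. }
  exists (- M). split; [|auto].
  apply NNPP. intros Hno.
  assert (Hgt : forall z, K z -> - M < F z).
  { intros z Kz. destruct (Rle_lt_or_eq_dec _ _ (Hge z Kz)) as [H|H]; auto.
    exfalso. apply Hno. exists z; auto. }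
  destruct (HC (fun y d => K y /\ forall z, near_n k d y z -> - M + (F y + M) / 2 < F z))
    as [l Hl].
  { intros y Ky. specialize (Hgt y Ky).
    destruct (HF y ((F y + M) / 2)) as [d [Hd H]]; [lra|].
    exists d; split; auto. split; auto.
    intros z Hz. specialize (H z Hz). apply Rabs_def2 in H. lra. }
  destruct (list_pos_lower_bound l (fun p => (F (fst p) + M) / 2) (fun p => K (fst p)))
    as [e [He He2]].
  { intros p _ Kp. specialize (Hgt _ Kp). simpl. lra. }
  assert (M <= M - e); [|lra].
  apply HM2. intros r [z [Kz ->]]. destruct (Hl z Kz) as [p [Hp [[Kp Hg] Hn]]].
  specialize (Hg z Hn). specialize (He2 p Hp Kp). simpl in He2. lra.
Qed.

Lemma near_n_open k d y z :
  near_n k d y z -> exists e, 0 < e /\ forall w, near_n k e z w -> near_n k d y w.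
Proof.
  intros H.
  assert (Hmin : exists e, 0 < e /\ forall i, (i < k)%nat -> e <= d - Rabs (y i - z i)).
  { clear -H. induction k as [|k IH]; [exists 1; split; [lra|intros; lia]|].
    destruct IH as [e [He H']]; [intros i Hi; apply H; lia|].
    assert (Hk := H k (Nat.lt_succ_diag_r k)).
    exists (Rmin e (d - Rabs (y k - z k))). split; [apply Rmin_glb_lt; lra|].
    intros i Hi. destruct (Nat.eq_dec i k) as [->|Hne]; [apply Rmin_r|].
    eapply Rle_trans; [apply Rmin_l|apply H'; lia]. }
  destruct Hmin as [e [He H']]. exists e; split; auto.
  intros w Hw i Hi. specialize (H' i Hi). specialize (Hw i Hi).
  replace (y i - w i) with ((y i - z i) + (z i - w i)) by ring.
  eapply Rle_lt_trans; [apply Rabs_triang|lra].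
Qed.

Lemma compact_finite_gauge_cover k K : compact_n k K -> finite_gauge_cover k K.
Proof.
  intros [_ HK] G HG.
  destruct (HK ((nat -> R) * R)%type
    (fun p z => K (fst p) /\ 0 < snd p /\ G (fst p) (snd p) /\ near_n k (snd p) (fst p) z))
    as [l Hl].
  - intros p z _ [Kp [Hp [Gp Hn]]]. destruct (near_n_open _ _ _ _ Hn) as [e [He He2]].
    exists e; split; auto.
  - intros x Kx. destruct (HG x Kx) as [d [Hd Gd]]. exists (x, d). simpl.
    repeat split; auto. intros i Hi. replace (x i - x i) with 0 by ring.
    rewrite Rabs_R0; auto.
  - exists l. intros x Kx. destruct (Hl x Kx) as [p [Hp [_ [_ [Gp Hn]]]]]. exists p; auto.
Qed.

Section CubeBisection.

Variable k : nat.
Variable G : (nat -> R) -> R -> Prop.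

Definition box := ((nat -> R) * (nat -> R))%type.

Definition in_box (s : box) (x : nat -> R) :=
  forall i, (i < k)%nat -> fst s i <= x i <= snd s i.

Definition box_covered (s : box) :=
  exists l : list ((nat -> R) * R), forall x, inRn k x -> in_box s x ->
    exists p, In p l /\ G (fst p) (snd p) /\ near_n k (snd p) (fst p) x.

Definition set_coord (f : nat -> R) i v := fun j => if Nat.eq_dec j i then v else f j.

Definition box_mid (s : box) i := (fst s i + snd s i) / 2.

(* Halve the box in coordinate [i], keeping a half that is not covered
   whenever possible. *)
Definition bisect i (s : box) : box :=
  if excluded_middle_informative (box_covered (fst s, set_coord (snd s) i (box_mid s i)))
  then (set_coord (fst s) i (box_mid s i), snd s)
  else (fst s, set_coord (snd s) i (box_mid s i)).

Lemma bisect_not_covered i s : ~ box_covered s -> ~ box_covered (bisect i s).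
Proof.
  intros Hs. unfold bisect.
  destruct excluded_middle_informative as [[l1 H1]|H]; auto.
  intros [l2 H2]. apply Hs. exists (l1 ++ l2). intros x Hx Hb.
  destruct (Rle_or_lt (x i) (box_mid s i)) as [Hm|Hm].
  - destruct (H1 x Hx) as [p [Hp Hq]].
    { intros j Hj. unfold set_coord; simpl. destruct Nat.eq_dec; subst; auto.
      split; auto. apply Hb; auto. }
    exists p. split; auto. apply in_or_app; auto.
  - destruct (H2 x Hx) as [p [Hp Hq]].
    { intros j Hj. unfold set_coord; simpl. destruct Nat.eq_dec; subst; auto.
      split; [lra|]. apply Hb; auto. }
    exists p. split; auto. apply in_or_app; auto.
Qed.

Lemma bisect_coords i s :
  (forall j, j <> i -> fst (bisect i s) j = fst s j /\ snd (bisect i s) j = snd s j) /\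
  ((fst (bisect i s) i = box_mid s i /\ snd (bisect i s) i = snd s i) \/
   (fst (bisect i s) i = fst s i /\ snd (bisect i s) i = box_mid s i)).
Proof.
  unfold bisect, set_coord.
  destruct excluded_middle_informative; simpl; split; intros;
    repeat destruct Nat.eq_dec; subst; auto; lia.
Qed.

Fixpoint bisect_first m (s : box) : box :=
  match m with O => s | S m => bisect m (bisect_first m s) end.

Lemma bisect_first_not_covered m s : ~ box_covered s -> ~ box_covered (bisect_first m s).
Proof. induction m; simpl; auto. intros; apply bisect_not_covered; auto. Qed.

Lemma bisect_first_coords m s i : fst s i <= snd s i ->
  ((i < m)%nat -> snd (bisect_first m s) i - fst (bisect_first m s) i = (snd s i - fst s i) / 2 /\
       fst s i <= fst (bisect_first m s) i /\ snd (bisect_first m s) i <= snd s i) /\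
  ((m <= i)%nat -> fst (bisect_first m s) i = fst s i /\ snd (bisect_first m s) i = snd s i).
Proof.
  intros Hle. induction m; simpl; [split; intros; [lia|auto]|].
  destruct IHm as [IH1 IH2]. destruct (bisect_coords m (bisect_first m s)) as [B1 B2].
  split; intros Hi.
  - destruct (Nat.eq_dec i m) as [->|Hne].
    + destruct (IH2 (le_n m)) as [E1 E2]. unfold box_mid in B2. rewrite E1, E2 in B2.
      destruct B2 as [[-> ->]|[-> ->]]; repeat split; lra.
    + destruct (B1 i Hne) as [-> ->]. apply IH1. lia.
  - destruct (B1 i ltac:(lia)) as [-> ->]. apply IH2. lia.
Qed.

Definition unit_cube : box := (fun _ => -1, fun _ => 1).

Definition nested_box j := Nat.iter j (bisect_first k) unit_cube.

Lemma nested_box_S j : nested_box (S j) = bisect_first k (nested_box j).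
Proof. reflexivity. Qed.

Lemma nested_box_step j i : fst (nested_box j) i <= snd (nested_box j) i /\
  fst (nested_box j) i <= fst (nested_box (S j)) i /\
  snd (nested_box (S j)) i <= snd (nested_box j) i /\
  ((i < k)%nat -> snd (nested_box j) i - fst (nested_box j) i = 2 / 2 ^ j).
Proof.
  induction j as [|j IH].
  - rewrite nested_box_S. simpl.
    destruct (bisect_first_coords k unit_cube i ltac:(simpl; lra)) as [H1 H2].
    destruct (lt_dec i k) as [Hi|Hi].
    + destruct (H1 Hi) as [A [B C]]. simpl in *. repeat split; lra.
    + destruct H2 as [-> ->]; [lia|]. simpl. repeat split; intros; lra || lia.
  - destruct IH as [Hle [_ [_ Hw]]]. rewrite !nested_box_S.
    destruct (bisect_first_coords k (nested_box j) i Hle) as [H1 H2].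
    set (b := bisect_first k (nested_box j)) in *.
    destruct (bisect_first_coords k b i) as [K1 K2].
    { destruct (lt_dec i k) as [Hi|Hi].
      - destruct (H1 Hi) as [A _]. lra.
      - destruct H2 as [-> ->]; lia || lra. }
    destruct (lt_dec i k) as [Hi|Hi].
    + destruct (H1 Hi) as [A _]. destruct (K1 Hi) as [A' [B' C']].
      rewrite (Hw Hi) in A. repeat split; try lra. intros _. rewrite A. simpl. field.
      apply pow_nonzero. lra.
    + destruct H2 as [E1 E2]; [lia|]. destruct K2 as [-> ->]; [lia|]. rewrite E1, E2.
      repeat split; intros; lra || lia.
Qed.

Lemma nested_box_lo_hi j j' i : fst (nested_box j) i <= snd (nested_box j') i.
Proof.
  assert (Hmono : forall j j', (j <= j')%nat ->
    fst (nested_box j) i <= fst (nested_box j') i /\ snd (nested_box j') i <= snd (nested_box j) i).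
  { induction 1; [lra|]. destruct (nested_box_step m i) as [_ [A [B _]]]. lra. }
  destruct (Hmono j (Nat.max j j')) as [A _]; [lia|].
  destruct (Hmono j' (Nat.max j j')) as [_ B]; [lia|].
  destruct (nested_box_step (Nat.max j j') i) as [C _]. lra.
Qed.

Lemma INR_lt_pow2 j : INR j < 2 ^ j.
Proof.
  induction j; [simpl; lra|]. rewrite S_INR. simpl.
  assert (1 <= 2 ^ j) by (clear IHj; induction j; simpl; lra). lra.
Qed.

(* The nested boxes shrink to a point [c]; the radius that [G] admits at [c]
   covers a whole box, contradicting that none of them is covered. *)
Lemma unit_cube_covered :
  (forall y, inRn k y -> (forall i, (i < k)%nat -> -1 <= y i <= 1) ->
     exists d, 0 < d /\ G y d) ->
  box_covered unit_cube.
Proof.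
  intros HG. apply NNPP. intros Hbad.
  assert (Hb : forall j, ~ box_covered (nested_box j)).
  { induction j; [exact Hbad|]. rewrite nested_box_S. apply bisect_first_not_covered; auto. }
  assert (Hc : forall i, exists c, forall j,
            fst (nested_box j) i <= c /\ c <= snd (nested_box j) i).
  { intros i.
    destruct (completeness (fun r => exists j, r = fst (nested_box j) i)) as [c [C1 C2]].
    - exists (snd (nested_box O) i). intros r [j ->]. apply nested_box_lo_hi.
    - exists (fst (nested_box O) i), O; auto.
    - exists c. intros j. split; [apply C1; exists j; auto|].
      apply C2. intros r [j' ->]. apply nested_box_lo_hi. }
  set (c := fun i => if lt_dec i k then proj1_sig (constructive_indefinite_description _ (Hc i))
                     else 0).
  assert (Hcb : forall i j, (i < k)%nat -> fst (nested_box j) i <= c i <= snd (nested_box j) i).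
  { intros i j Hi. unfold c. destruct lt_dec; [|lia].
    destruct (constructive_indefinite_description _ (Hc i)) as [ci Hci]. apply Hci. }
  destruct (HG c) as [d [Hd Gd]].
  { intros i Hi. unfold c. destruct lt_dec; [lia|auto]. }
  { intros i Hi. exact (Hcb i O Hi). }
  destruct (INR_archimed d 2 Hd) as [j Hj].
  apply (Hb j). exists [(c, d)]. intros x _ Hx. exists (c, d). simpl.
  split; auto. split; auto. intros i Hi.
  specialize (Hx i Hi). specialize (Hcb i j Hi).
  destruct (nested_box_step j i) as [_ [_ [_ Hw]]]. specialize (Hw Hi).
  assert (2 / 2 ^ j < d).
  { assert (0 < 2 ^ j) by (apply pow_lt; lra). pose proof (INR_lt_pow2 j).
    assert (d * INR j < d * 2 ^ j) by (apply Rmult_lt_compat_l; auto).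
    apply (Rmult_lt_reg_r (2 ^ j)); [lra|].
    unfold Rdiv. rewrite Rmult_assoc, Rinv_l by lra. lra. }
  apply Rabs_def1; lra.
Qed.

End CubeBisection.

Lemma closed_in_cube_finite_gauge_cover k K :
  (forall x, K x -> inRn k x /\ forall i, (i < k)%nat -> -1 <= x i <= 1) ->
  (forall y, inRn k y -> ~ K y -> exists d, 0 < d /\ forall z, near_n k d y z -> ~ K z) ->
  finite_gauge_cover k K.
Proof.
  intros Hbox Hcl G HG.
  destruct (unit_cube_covered k
    (fun y d => (K y /\ G y d) \/ (~ K y /\ forall z, near_n k d y z -> ~ K z))) as [l Hl].
  { intros y Hy _. destruct (classic (K y)) as [Ky|nKy].
    - destruct (HG y Ky) as [d [Hd Gd]]. exists d; auto.
    - destruct (Hcl y Hy nKy) as [d [Hd H]]. exists d; auto. }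
  exists l. intros x Kx. destruct (Hbox x Kx) as [Hx Hx2].
  destruct (Hl x Hx) as [p [Hp [[[_ Gp]|[_ Hn]] Hnear]]].
  - intros i Hi. simpl. apply Hx2; auto.
  - exists p; auto.
  - exfalso. apply (Hn x Hnear Kx).
Qed.

Lemma monoval_scale a t x : monoval a (fun i => t * x i) = t ^ mdeg a * monoval a x.
Proof.
  revert x; induction a as [|c a IH]; intros x; [unfold mdeg; simpl; ring|].
  cbn [monoval]. rewrite (IH (fun i => x (S i))), mdeg_cons, pow_add, Rpow_mult_distr. ring.
Qed.

Lemma monoval_zeros m x : monoval (repeat 0%nat m) x = 1.
Proof. revert x; induction m; intros x; simpl; auto. rewrite IHm. ring. Qed.

Lemma monoval_single i e r x : monoval (repeat 0%nat i ++ e :: repeat 0%nat r) x = x i ^ e.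
Proof. revert x; induction i; intros x; simpl; [rewrite monoval_zeros|rewrite IHi]; ring. Qed.

Lemma Rabs_pow_le_1 r m : Rabs r <= 1 -> Rabs (r ^ m) <= 1.
Proof.
  intros H. rewrite <- RPow_abs. induction m; simpl; [lra|].
  assert (0 <= Rabs r ^ m) by (apply pow_le, Rabs_pos). pose proof (Rabs_pos r). nra.
Qed.

Lemma Rabs_monoval_le_1 a x : (forall i, Rabs (x i) <= 1) -> Rabs (monoval a x) <= 1.
Proof.
  revert x; induction a as [|c a IH]; intros x H; simpl; [rewrite Rabs_R1; lra|].
  rewrite Rabs_mult.
  pose proof (Rabs_pow_le_1 (x O) c (H O)). pose proof (IH _ (fun i => H (S i))).
  pose proof (Rabs_pos (x O ^ c)). pose proof (Rabs_pos (monoval a (fun i => x (S i)))). nra.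
Qed.

Lemma phom_scale n D e p t y : (forall a, p a <> 0 -> (mdeg a <= e)%nat) ->
  phom n D e p t (fun i => t * y i) = t ^ e * peval n D p y.
Proof.
  intros H. unfold phom, peval. rewrite <- sumR_map_scal. apply sumR_map_ext. intros a _.
  rewrite monoval_scale. destruct (Req_dec (p a) 0) as [E|E]; [rewrite E; ring|].
  specialize (H a E). replace e with ((e - mdeg a) + mdeg a)%nat at 2 by lia.
  rewrite pow_add. ring.
Qed.

Lemma phom_dehom n D e p x0 x : 0 < x0 -> (forall a, p a <> 0 -> (mdeg a <= e)%nat) ->
  phom n D e p x0 x = x0 ^ e * peval n D p (fun i => x i / x0).
Proof.
  intros Hx0 H. rewrite <- phom_scale by auto. f_equal.
  apply functional_extensionality. intros i. field. lra.
Qed.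

Definition sub_coef (f : mpoly) (a : midx) (c : R) : mpoly :=
  fun b => if midx_eq_dec b a then f b - c else f b.

Lemma supp_sub_coef n d f a c : supp n d f -> In a (midxs n d) -> supp n d (sub_coef f a c).
Proof. intros Hs Ha b Hb. unfold sub_coef in Hb. destruct (midx_eq_dec b a) as [->|]; auto. Qed.

Lemma cdist_sub_coef n d f a c : In a (midxs n d) -> cdist n d f (sub_coef f a c) = Rabs c.
Proof.
  intros Ha. unfold cdist, sub_coef.
  rewrite (sumR_map_ext _ (fun b => if midx_eq_dec b a then Rabs c else 0)).
  - rewrite sumR_map_update, sumR_map_eq0; auto using NoDup_midxs. ring.
  - intros b _. destruct midx_eq_dec; [f_equal; ring|].
    replace (f b - f b) with 0 by ring. apply Rabs_R0.
Qed.

Lemma peval_sub_coef n d f a c x : In a (midxs n d) ->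
  peval n d (sub_coef f a c) x = peval n d f x - c * monoval a x.
Proof.
  intros Ha. unfold peval, sub_coef.
  rewrite (sumR_map_ext _ (fun b => if midx_eq_dec b a then (f b - c) * monoval b x
                                     else f b * monoval b x))
    by (intros b _; destruct midx_eq_dec; auto).
  rewrite sumR_map_update; auto using NoDup_midxs. ring.
Qed.

Lemma phom_sub_coef n d e f a c x0 x : In a (midxs n d) ->
  phom n d e (sub_coef f a c) x0 x = phom n d e f x0 x - c * x0 ^ (e - mdeg a) * monoval a x.
Proof.
  intros Ha. unfold phom, sub_coef.
  rewrite (sumR_map_ext _ (fun b => if midx_eq_dec b a
                                     then (f b - c) * x0 ^ (e - mdeg b) * monoval b x
                                     else f b * x0 ^ (e - mdeg b) * monoval b x))
    by (intros b _; destruct midx_eq_dec; auto).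
  rewrite sumR_map_update; auto using NoDup_midxs. ring.
Qed.

Lemma cdist_self n d f : cdist n d f f = 0.
Proof.
  apply sumR_map_eq0. intros. replace (f a - f a) with 0 by ring. apply Rabs_R0.
Qed.

Lemma cdist_nonneg n d f h : 0 <= cdist n d f h.
Proof. apply sumR_map_nonneg. intros; apply Rabs_pos. Qed.

(* [monomial_abs_sum n d x] = sum over |a| <= d of |x^a|, the Lipschitz
   constant of [f |-> f(x)] for the l1 coefficient distance. *)
Definition monomial_abs_sum n d (x : nat -> R) :=
  sumR (map (fun a => Rabs (monoval a x)) (midxs n d)).

Lemma monomial_abs_sum_nonneg n d x : 0 <= monomial_abs_sum n d x.
Proof. apply sumR_map_nonneg. intros; apply Rabs_pos. Qed.

Lemma cont_monomial_abs_sum n d : cont_n n (monomial_abs_sum n d).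
Proof.
  apply (cont_sumR n (fun a x => Rabs (monoval a x))). intros a Ha.
  apply cont_abs. apply in_midxs in Ha. apply cont_monoval. lia.
Qed.

Lemma Rabs_peval_sub_le n d f h x :
  Rabs (peval n d f x - peval n d h x) <= cdist n d f h * monomial_abs_sum n d x.
Proof.
  rewrite Rmult_comm. unfold peval, cdist, monomial_abs_sum.
  rewrite sumR_map_minus, <- sumR_map_scal.
  eapply Rle_trans; [apply Rabs_sumR_map_le|]. apply sumR_map_le. intros a Ha.
  replace (f a * monoval a x - h a * monoval a x) with ((f a - h a) * monoval a x) by ring.
  rewrite Rabs_mult, Rmult_comm. apply Rmult_le_compat_r; [apply Rabs_pos|].
  apply (sumR_map_ge_term (fun a => Rabs (monoval a x))); auto. intros; apply Rabs_pos.
Qed.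

Lemma Rabs_phom_sub_le n d e f h x0 x : Rabs x0 <= 1 -> (forall i, Rabs (x i) <= 1) ->
  Rabs (phom n d e f x0 x - phom n d e h x0 x) <= cdist n d f h.
Proof.
  intros H0 H. unfold phom, cdist. rewrite sumR_map_minus.
  eapply Rle_trans; [apply Rabs_sumR_map_le|]. apply sumR_map_le. intros a _.
  replace (f a * x0 ^ (e - mdeg a) * monoval a x - h a * x0 ^ (e - mdeg a) * monoval a x)
    with ((f a - h a) * (x0 ^ (e - mdeg a) * monoval a x)) by ring.
  rewrite Rabs_mult. apply Rle_trans with (Rabs (f a - h a) * 1); [|lra].
  apply Rmult_le_compat_l; [apply Rabs_pos|]. rewrite Rabs_mult, <- (Rmult_1_r 1).
  apply Rmult_le_compat; try apply Rabs_pos.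
  - apply Rabs_pow_le_1, H0.
  - apply Rabs_monoval_le_1, H.
Qed.

Lemma closure_Pd_nonneg n d Dg g f :
  closureP n d (Pd n d Dg g) f -> forall x, VR n Dg g x -> 0 <= peval n d f x.
Proof.
  intros [Hs Hc] x Hx. apply Rnot_lt_le. intros Hneg.
  set (B := monomial_abs_sum n d x). assert (HB : 0 <= B) by apply monomial_abs_sum_nonneg.
  destruct (Hc (- peval n d f x / (B + 1))) as [h [Hh [[_ HP] Hd]]].
  { apply Rdiv_lt_0_compat; lra. }
  specialize (HP x Hx). pose proof (Rabs_peval_sub_le n d f h x) as D. fold B in D.
  pose proof (Rle_abs (- (peval n d f x - peval n d h x))) as D2. rewrite Rabs_Ropp in D2.
  assert (cdist n d f h * B <= - peval n d f x / (B + 1) * B)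
    by (apply Rmult_le_compat_r; lra).
  assert (- peval n d f x / (B + 1) * B < - peval n d f x).
  { replace (- peval n d f x / (B + 1) * B) with (- peval n d f x * (B / (B + 1)))
      by (field; lra).
    pose proof (Rdiv_add1_lt_1 B HB). nra. }
  lra.
Qed.

(* Lowering the constant coefficient by [e/2] stays in [P_d(g)]. *)
Lemma interior_Pd_pos n d Dg g f :
  interiorP n d (Pd n d Dg g) f -> forall x, VR n Dg g x -> 0 < peval n d f x.
Proof.
  intros [Hf [e [He H]]] x Hx.
  pose proof (zeros_in_midxs n d) as Hz.
  destruct (H (sub_coef f (repeat 0%nat n) (e / 2))) as [_ HP].
  - apply supp_sub_coef; auto.
  - rewrite cdist_sub_coef, Rabs_right by (auto; lra). lra.
  - specialize (HP x Hx). rewrite peval_sub_coef, monoval_zeros in HP by auto. lra.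
Qed.

Lemma Pd_interior_of_margin n d Dg g f m B :
  supp n d f -> 0 < m ->
  (forall x, VR n Dg g x -> m <= peval n d f x /\ monomial_abs_sum n d x <= B) ->
  interiorP n d (Pd n d Dg g) f.
Proof.
  intros Hf Hm H. split; auto.
  pose proof (Rabs_pos B) as HB. pose proof (Rle_abs B).
  exists (m / (Rabs B + 1)). split; [apply Rdiv_lt_0_compat; lra|].
  intros h Hh Hd. split; auto. intros x Hx. destruct (H x Hx) as [Hfx HBx].
  pose proof (Rabs_peval_sub_le n d f h x) as D.
  pose proof (Rle_abs (peval n d f x - peval n d h x)).
  pose proof (monomial_abs_sum_nonneg n d x).
  pose proof (cdist_nonneg n d f h).
  assert (cdist n d f h * monomial_abs_sum n d x <= m / (Rabs B + 1) * Rabs B)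
    by (apply Rmult_le_compat; lra).
  assert (m / (Rabs B + 1) * Rabs B < m).
  { replace (m / (Rabs B + 1) * Rabs B) with (m * (Rabs B / (Rabs B + 1))) by (field; lra).
    pose proof (Rdiv_add1_lt_1 (Rabs B) HB). nra. }
  lra.
Qed.

Lemma min_sign_interior_boundary {T} (K : T -> Prop) (phi : T -> R) v n d
    (S : mpoly -> Prop) f :
  supp n d f -> is_min K phi v ->
  (interiorP n d S f -> forall x, K x -> 0 < phi x) ->
  (forall m, 0 < m -> (forall x, K x -> m <= phi x) -> interiorP n d S f) ->
  (closureP n d S f -> forall x, K x -> 0 <= phi x) ->
  ((forall x, K x -> 0 <= phi x) -> S f) ->
  (0 < v <-> interiorP n d S f) /\ (v = 0 <-> boundaryP n d S f).
Proof.
  intros Hf [[x0 [Kx0 Hv]] Hlow] Hpos Hmargin Hcl Hnonneg.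
  assert (Hint : 0 < v <-> interiorP n d S f).
  { split; [intros; apply (Hmargin v); auto|].
    intros Hi. rewrite <- Hv. auto. }
  split; auto. split.
  - intros ->. split.
    + split; auto. intros eps He. exists f. rewrite cdist_self. auto.
    + intros Hi. apply Hint in Hi. lra.
  - intros [Hc Hni]. assert (0 <= v) by (rewrite <- Hv; auto).
    destruct (Rle_lt_or_eq_dec _ _ H) as [Hlt|]; auto. exfalso. apply Hni, Hint, Hlt.
Qed.

(** * Part (i): compact zero set *)

Lemma delta_sign_compact n Dg d g f :
  (exists x, VR n Dg g x) -> compact_n n (VR n Dg g) -> supp n d f ->
  exists v, is_min (VR n Dg g) (peval n d f) v /\
    (0 < v <-> interiorP n d (Pd n d Dg g) f) /\
    (v = 0 <-> boundaryP n d (Pd n d Dg g) f).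
Proof.
  intros Hne Hcp Hf. pose proof (compact_finite_gauge_cover _ _ Hcp) as HC.
  destruct (gauge_cover_attains_min _ _ _ HC Hne (cont_peval n d f)) as [v Hv].
  destruct (gauge_cover_bounded_below _ _ _ HC (cont_opp _ _ (cont_monomial_abs_sum n d)))
    as [B HB].
  exists v. split; auto.
  apply (min_sign_interior_boundary _ _ _ _ _ _ _ Hf Hv).
  - apply interior_Pd_pos.
  - intros m Hm Hlow. apply (Pd_interior_of_margin _ _ _ _ _ m (- B) Hf Hm).
    intros x Hx. specialize (HB x Hx). split; auto. lra.
  - apply closure_Pd_nonneg.
  - split; auto.
Qed.

(** * Part (ii): closedness at infinity *)

Definition unpack (y : nat -> R) : R * (nat -> R) := (y O, fun i => y (S i)).

Definition pack (p : R * (nat -> R)) : nat -> R :=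
  fun i => match i with O => fst p | S j => snd p j end.

Lemma unpack_pack p : unpack (pack p) = p.
Proof. destruct p. reflexivity. Qed.

Lemma cont_phom n D e p : cont_n (S n) (fun y => phom n D e p (fst (unpack y)) (snd (unpack y))).
Proof.
  apply (cont_sumR (S n) (fun a y => p a * y O ^ (e - mdeg a) * monoval a (fun i => y (S i)))).
  intros a Ha. apply cont_mult; [apply cont_mult; [apply cont_const|]|].
  - apply cont_pow, cont_coord. lia.
  - apply (cont_shift n (monoval a)), cont_monoval. apply in_midxs in Ha. lia.
Qed.

Lemma cont_sqnorm_h n : cont_n (S n) (fun y => sqnorm_h n (unpack y)).
Proof.
  apply cont_plus; [apply cont_pow, cont_coord; lia|].
  apply (cont_sumR (S n) (fun i y => y (S i) ^ 2)). intros i Hi. apply in_seq in Hi.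
  apply cont_pow, cont_coord. lia.
Qed.

Lemma Sh_in_unit_ball n Dg g p :
  Sh n Dg g p -> Rabs (fst p) <= 1 /\ forall i, Rabs (snd p i) <= 1.
Proof.
  intros [[Hin _] [Hs _]]. unfold sqnorm_h in Hs.
  set (Q := sumR (map (fun i => snd p i ^ 2) (seq 0 n))) in Hs.
  assert (HQ : 0 <= Q) by (apply sumR_map_nonneg; intros; apply pow2_ge_0).
  assert (Hsq : forall r, r ^ 2 <= 1 -> Rabs r <= 1)
    by (intros r Hr; unfold Rabs; destruct Rcase_abs; nra).
  pose proof (pow2_ge_0 (fst p)).
  split; [apply Hsq; lra|]. intros i. destruct (lt_dec i n) as [Hi|Hi].
  - apply Hsq. assert (snd p i ^ 2 <= Q); [|lra].
    apply (sumR_map_ge_term (fun i => snd p i ^ 2)); [intros; apply pow2_ge_0|].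
    apply in_seq. lia.
  - rewrite Hin by lia. rewrite Rabs_R0. lra.
Qed.

Lemma Sh_closed n Dg g y : inRn (S n) y -> ~ Sh n Dg g (unpack y) ->
  exists d, 0 < d /\ forall z, near_n (S n) d y z -> ~ Sh n Dg g (unpack z).
Proof.
  intros Hy Hn.
  destruct (classic (Forall (fun gi => phom n Dg (pdeg n Dg gi) gi (y O) (fun i => y (S i)) = 0) g))
    as [HF|HF].
  - destruct (Req_dec (sqnorm_h n (unpack y)) 1) as [HS|HS].
    + assert (Hy0 : y O < 0).
      { apply Rnot_le_lt. intros H0. apply Hn. repeat split; auto.
        intros i Hi. apply Hy. lia. }
      exists (- y O). split; [lra|]. intros z Hz [_ [_ H0]].
      specialize (Hz O ltac:(lia)). simpl in H0. apply Rabs_def2 in Hz. lra.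
    + destruct (cont_neq _ _ y 1 (cont_sqnorm_h n) HS) as [d [Hd H]].
      exists d; split; auto. intros z Hz [_ [H1 _]]. apply (H z Hz H1).
  - rewrite Forall_forall in HF. apply not_all_ex_not in HF.
    destruct HF as [gi Hgi]. apply imply_to_and in Hgi. destruct Hgi as [Hgi Hne].
    destruct (cont_neq _ _ y 0 (cont_phom n Dg (pdeg n Dg gi) gi) Hne) as [d [Hd H]].
    exists d; split; auto. intros z Hz [[_ HF] _]. rewrite Forall_forall in HF.
    apply (H z Hz), (HF gi Hgi).
Qed.

Lemma Sh_finite_gauge_cover n Dg g :
  finite_gauge_cover (S n) (fun y => Sh n Dg g (unpack y)).
Proof.
  apply closed_in_cube_finite_gauge_cover; [|apply Sh_closed].
  intros y Hy. destruct (Sh_in_unit_ball _ _ _ _ Hy) as [B0 B]. simpl in B0, B.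
  destruct Hy as [[Hin _] _]. split.
  - intros [|i] Hi; [lia|]. apply Hin. lia.
  - intros [|i] _; [revert B0|specialize (B i); revert B];
      unfold Rabs; destruct Rcase_abs; lra.
Qed.

Lemma VRh_dehom n Dg g p : Forall (supp n Dg) g -> VRh n Dg g p -> 0 < fst p ->
  VR n Dg g (fun i => snd p i / fst p).
Proof.
  intros Hg [Hin Hf] Hp. split.
  - intros i Hi. rewrite Hin by auto. unfold Rdiv. ring.
  - rewrite Forall_forall in *. intros gi Hgi. specialize (Hf gi Hgi).
    rewrite phom_dehom in Hf by (auto; intros; apply pdeg_ge_mdeg; auto).
    apply Rmult_integral in Hf. destruct Hf as [Hf|]; auto.
    exfalso. apply (pow_nonzero (fst p) (pdeg n Dg gi)); lra.
Qed.

Lemma VR_normalize_Sh n Dg g x : Forall (supp n Dg) g -> VR n Dg g x ->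
  exists t, 0 < t /\ Sh n Dg g (t, fun i => t * x i).
Proof.
  intros Hg [Hin Hf].
  set (Q := sumR (map (fun i => x i ^ 2) (seq 0 n))).
  assert (HQ : 0 <= Q) by (apply sumR_map_nonneg; intros; apply pow2_ge_0).
  set (N := sqrt (1 + Q)).
  assert (HN : 0 < N) by (apply sqrt_lt_R0; lra).
  assert (HN2 : N * N = 1 + Q) by (apply sqrt_sqrt; lra).
  exists (/ N). split; [apply Rinv_0_lt_compat; auto|].
  split; [split|split].
  - intros i Hi. simpl. rewrite Hin by auto. ring.
  - rewrite Forall_forall in *. intros gi Hgi. simpl.
    rewrite phom_scale, (Hf gi Hgi) by (intros; apply pdeg_ge_mdeg; auto). ring.
  - unfold sqnorm_h. simpl.
    rewrite (sumR_map_ext _ (fun i => (/ N * / N) * x i ^ 2)) by (intros; ring).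
    rewrite sumR_map_scal. fold Q.
    replace (/ N * (/ N * 1) + / N * / N * Q) with ((1 + Q) / (N * N)) by (field; lra).
    rewrite HN2. field. lra.
  - simpl. left. apply Rinv_0_lt_compat; auto.
Qed.

Lemma Pd_of_phom_nonneg n Dg d g h : Forall (supp n Dg) g -> supp n d h ->
  (forall p, Sh n Dg g p -> 0 <= phom n d d h (fst p) (snd p)) ->
  forall x, VR n Dg g x -> 0 <= peval n d h x.
Proof.
  intros Hg Hh H x Hx. destruct (VR_normalize_Sh n Dg g x Hg Hx) as [t [Ht HS]].
  specialize (H _ HS). simpl in H.
  rewrite phom_scale in H by (intros; eapply supp_mdeg; eauto).
  assert (0 < t ^ d) by (apply pow_lt; auto). nra.
Qed.

(* The converse needs closedness at infinity: a point with [x0 = 0] is a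
   limit of points with [x0 > 0], where [h^h] is [x0^d] times a value of [h]
   on [V(g)]. *)
Lemma phom_nonneg_closed_at_inf n Dg d g h p :
  Forall (supp n Dg) g -> closed_at_inf n Dg g -> supp n d h ->
  (forall x, VR n Dg g x -> 0 <= peval n d h x) ->
  VRh n Dg g p -> 0 <= fst p -> 0 <= phom n d d h (fst p) (snd p).
Proof.
  intros Hg Hci Hh HP Hp Hp0. apply Rnot_lt_le. intros Hneg.
  destruct (proj1 (Hci p) (conj Hp Hp0)) as [_ Hcl].
  destruct (cont_phom n d d h (pack p) (- phom n d d h (fst p) (snd p)))
    as [del [Hdel Hcont]]; [lra|].
  destruct (Hcl del Hdel) as [q [[Hq Hq0] [Hd1 Hd2]]].
  assert (Hnear : near_n (S n) del (pack p) (pack q))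
    by (intros [|i] Hi; simpl; auto; apply Hd2; lia).
  specialize (Hcont _ Hnear). rewrite !unpack_pack in Hcont.
  specialize (HP _ (VRh_dehom n Dg g q Hg Hq Hq0)).
  rewrite (phom_dehom n d d h (fst q)) in Hcont by (auto; intros; eapply supp_mdeg; eauto).
  assert (0 <= fst q ^ d) by (apply pow_le; lra).
  assert (0 <= fst q ^ d * peval n d h (fun i => snd q i / fst q)) by (apply Rmult_le_pos; auto).
  apply Rabs_def2 in Hcont. lra.
Qed.

(* At [x0 = 0] some [x_i] is nonzero; lowering the coefficient of [x_i^d] by
   [t x_i^d] lowers [f^h(0, x)] by [t x_i^(2d)]. *)
Lemma interior_Pd_phom_pos n Dg d g f :
  Forall (supp n Dg) g -> closed_at_inf n Dg g ->
  interiorP n d (Pd n d Dg g) f -> forall p, Sh n Dg g p -> 0 < phom n d d f (fst p) (snd p).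
Proof.
  intros Hg Hci Hint [x0 x] [HV [HS Hx0]]. simpl in *.
  destruct Hint as [Hf [e [He H]]].
  destruct (Rle_lt_or_eq_dec _ _ Hx0) as [Hpos|<-].
  - rewrite phom_dehom by (auto; intros; eapply supp_mdeg; eauto).
    apply Rmult_lt_0_compat; [apply pow_lt; auto|].
    apply (interior_Pd_pos n d Dg g f); [split; eauto|].
    apply (VRh_dehom n Dg g (x0, x)); auto.
  - assert (Hi : exists i, (i < n)%nat /\ x i <> 0).
    { apply NNPP. intros Hno. unfold sqnorm_h in HS. simpl in HS.
      rewrite sumR_map_eq0 in HS; [lra|]. intros i Hi. apply in_seq in Hi.
      destruct (Req_dec (x i) 0) as [->|E]; [ring|]. exfalso. apply Hno. exists i; split; auto; lia. }
    destruct Hi as [i [Hi Hxi]].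
    set (a := repeat 0%nat i ++ d :: repeat 0%nat (n - 1 - i)).
    assert (Ha : In a (midxs n d)) by (apply single_in_midxs; auto).
    set (c := x i ^ d). assert (Hc : c <> 0) by (apply pow_nonzero; auto).
    pose proof (Rabs_pos c).
    set (t := e / (2 * (Rabs c + 1))). assert (Ht : 0 < t) by (apply Rdiv_lt_0_compat; lra).
    destruct (H (sub_coef f a (t * c))) as [_ HP].
    + apply supp_sub_coef; auto.
    + rewrite cdist_sub_coef, Rabs_mult, (Rabs_right t) by (auto; lra).
      replace (t * Rabs c) with (e / 2 * (Rabs c / (Rabs c + 1))) by (unfold t; field; lra).
      pose proof (Rdiv_add1_lt_1 (Rabs c) (Rabs_pos c)). nra.
    + pose proof (phom_nonneg_closed_at_inf n Dg d g _ (0, x) Hg Hci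
                    (supp_sub_coef n d f a _ Hf Ha) HP HV (Rle_refl 0)) as HB.
      simpl in HB. rewrite phom_sub_coef in HB by auto.
      unfold a in HB. rewrite mdeg_single, monoval_single, Nat.sub_diag in HB.
      fold c in HB. simpl in HB.
      assert (0 < t * (c * c)) by (apply Rmult_lt_0_compat; auto; apply Rsqr_pos_lt; auto).
      nra.
Qed.

Lemma Pd_interior_of_margin_h n Dg d g f m :
  Forall (supp n Dg) g -> supp n d f -> 0 < m ->
  (forall p, Sh n Dg g p -> m <= phom n d d f (fst p) (snd p)) ->
  interiorP n d (Pd n d Dg g) f.
Proof.
  intros Hg Hf Hm Hlow. split; auto. exists m. split; auto.
  intros h Hh Hd. split; auto. intros x Hx.
  destruct (VR_normalize_Sh n Dg g x Hg Hx) as [t [Ht HS]].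
  specialize (Hlow _ HS). destruct (Sh_in_unit_ball _ _ _ _ HS) as [B0 B]. simpl in *.
  pose proof (Rabs_phom_sub_le n d d f h t (fun i => t * x i) B0 B) as D.
  pose proof (Rle_abs (phom n d d f t (fun i => t * x i) - phom n d d h t (fun i => t * x i))).
  assert (Hpos : 0 < phom n d d h t (fun i => t * x i)) by lra.
  rewrite phom_scale in Hpos by (intros; eapply supp_mdeg; [exact Hh|auto]).
  assert (0 < t ^ d) by (apply pow_lt; auto). nra.
Qed.

Lemma is_min_unpack (S : R * (nat -> R) -> Prop) (phi : R * (nat -> R) -> R) v :
  is_min (fun y => S (unpack y)) (fun y => phi (unpack y)) v -> is_min S phi v.
Proof.
  intros [[y [Sy Hv]] Hlow]. split; [exists (unpack y); auto|].
  intros p Sp. rewrite <- (unpack_pack p) in Sp |- *. auto.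
Qed.

Lemma delta_h_sign_closed_at_inf n Dg d g f :
  Forall (supp n Dg) g -> (exists x, VR n Dg g x) -> closed_at_inf n Dg g -> supp n d f ->
  exists v, is_min (Sh n Dg g) (fun p => phom n d d f (fst p) (snd p)) v /\
    (0 < v <-> interiorP n d (Pd n d Dg g) f) /\
    (v = 0 <-> boundaryP n d (Pd n d Dg g) f).
Proof.
  intros Hg [x1 Hx1] Hci Hf.
  assert (Hne : exists y, Sh n Dg g (unpack y)).
  { destruct (VR_normalize_Sh n Dg g x1 Hg Hx1) as [t [_ HS]].
    exists (pack (t, fun i => t * x1 i)). rewrite unpack_pack. exact HS. }
  destruct (gauge_cover_attains_min _ _ _ (Sh_finite_gauge_cover n Dg g) Hne
              (cont_phom n d d f)) as [v Hv].
  apply (is_min_unpack _ (fun p => phom n d d f (fst p) (snd p))) in Hv.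
  exists v. split; auto.
  apply (min_sign_interior_boundary _ _ _ _ _ _ _ Hf Hv).
  - apply interior_Pd_phom_pos; auto.
  - intros m Hm Hlow. apply (Pd_interior_of_margin_h n Dg d g f m); auto.
  - intros Hcl [x0 x] [HV [_ Hx0]].
    apply (phom_nonneg_closed_at_inf n Dg d g); auto. apply closure_Pd_nonneg, Hcl.
  - intros H. split; auto. apply Pd_of_phom_nonneg; auto.
Qed.

Theorem mainTheorem9 (n Dg d : nat) (g : list mpoly) :
  Forall (supp n Dg) g ->
  (exists x, VR n Dg g x) ->
  (1 <= d)%nat ->
  (compact_n n (VR n Dg g) ->
   forall f : mpoly, supp n d f ->
   exists v, is_min (VR n Dg g) (peval n d f) v /\
     (0 < v <-> interiorP n d (Pd n d Dg g) f) /\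
     (v = 0 <-> boundaryP n d (Pd n d Dg g) f)) /\
  (closed_at_inf n Dg g ->
   forall f : mpoly, supp n d f ->
   exists v, is_min (Sh n Dg g) (fun p => phom n d d f (fst p) (snd p)) v /\
     (0 < v <-> interiorP n d (Pd n d Dg g) f) /\
     (v = 0 <-> boundaryP n d (Pd n d Dg g) f)).
Proof.
  intros Hg Hne _. split.
  - intros Hc f Hf. apply delta_sign_compact; auto.
  - intros Hci f Hf. apply delta_h_sign_closed_at_inf; auto.
Qed.
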